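(* Let $A \in \mathbb{C}^{n \times n}$, and fix $A^-\in A\{1\}$ and $A^{GD}\in A\{GD\}$. For $X\in\mathbb{C}^{n\times n}$ the following are equivalent: (i) $X = A^{GD}AA^{-}$; (ii) $XAX =X$, $XA= A^{GD}A$, $AX = AA^{-}$, and $AXA = A$; (iii) $XAX =X$, $XA= A^{GD}A$, and $AX = AA^{-}$; (iv) $A^{GD}AX =X$, $XA= A^{GD}A$, $AX = AA^{-}$, and $XAA^{-} = X$.
   Context: For $A\in\mathbb{C}^{n\times n}$, $ind(A)$ is the smallest nonnegative integer $k$ with $\mathrm{rank}(A^k)=\mathrm{rank}(A^{k+1})$. $A\{1\}$ is the set of matrices $X$ with $AXA=A$. With $k=ind(A)$, $A\{GD\}$ is the set of G-Drazin inverses of $A$: matrices $X$ with $AXA=A$, $XA^{k+1}=A^k$, $A^{k+1}X=A^k$. *)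

(* Complex matrices: entries in R[i] (= complex R) for an
   arbitrary R : realType, i.e. the complex numbers built on the reals. *)
From HB Require Import structures.
From mathcomp Require Import all_boot all_order all_algebra.
From mathcomp Require Import reals.
From mathcomp Require Export complex.
Set Implicit Arguments. Unset Strict Implicit. Unset Printing Implicit Defensive.
Import Order.TTheory GRing.Theory Num.Theory.
Local Open Scope ring_scope.

(* ind(A): smallest k with rank(A^k) = rank(A^(k+1)).  Such a k always exists
   and is <= n, so searching 0..n gives exactly the least one. *)
Definition mxind (F : fieldType) (n : nat) (A : 'M[F]_n) : nat :=
  find (fun k => \rank (A ^+ k) == \rank (A ^+ k.+1)) (iota 0 n.+1).

Definition inner_inverse (F : fieldType) (n : nat) (A X : 'M[F]_n) : Prop :=
  A *m X *m A = A.

Definition GD_inverse (F : fieldType) (n : nat) (A X : 'M[F]_n) : Prop :=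
  let k := mxind A in
  [/\ A *m X *m A = A, X *m A ^+ k.+1 = A ^+ k & A ^+ k.+1 *m X = A ^+ k].

From HB Require Import structures.
From mathcomp Require Import all_boot all_order all_algebra.
From mathcomp Require Import reals.
From mathcomp Require Import complex.
Import Order.TTheory GRing.Theory Num.Theory.
Local Open Scope ring_scope.

(* Since A G A = A and A Am A = A, the product P = G A Am satisfies
   P A = G A and A P = A Am, so it is an outer inverse of A.  Conversely
   a matrix X with G A X = X (in particular an outer inverse with X A = G A)
   and A X = A Am equals G (A X) = G A Am. *)

Section InnerInverseProduct.

Variables (R : pzSemiRingType) (m n : nat).
Variables (A : 'M[R]_(m, n)) (Am G : 'M[R]_(n, m)).

Lemma eq_inner_prod_of_left (X : 'M[R]_(n, m)) :
  G *m A *m X = X -> A *m X = A *m Am -> X = G *m A *m Am.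
Proof. by move=> GAX AX; rewrite -GAX -mulmxA AX mulmxA. Qed.

Lemma left_unit_of_outer (X : 'M[R]_(n, m)) :
  X *m A *m X = X -> X *m A = G *m A -> G *m A *m X = X.
Proof. by move=> XAX XA; rewrite -XA. Qed.

Lemma right_unit_of_outer (X : 'M[R]_(n, m)) :
  X *m A *m X = X -> A *m X = A *m Am -> X *m A *m Am = X.
Proof. by move=> XAX AX; rewrite -mulmxA -AX mulmxA. Qed.

Hypotheses (AmA : A *m Am *m A = A) (AGA : A *m G *m A = A).

Lemma inner_prod_mulmx : G *m A *m Am *m A = G *m A.
Proof. by rewrite -!mulmxA (mulmxA A) AmA. Qed.

Lemma mulmx_inner_prod : A *m (G *m A *m Am) = A *m Am.
Proof. by rewrite !mulmxA AGA. Qed.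

Lemma inner_prod_outer : G *m A *m Am *m A *m (G *m A *m Am) = G *m A *m Am.
Proof. by rewrite inner_prod_mulmx -mulmxA mulmx_inner_prod mulmxA. Qed.

End InnerInverseProduct.

Theorem theorem2p8 (R : realType) (n : nat) (A Am AGD X : 'M[R[i]]_n) :
  inner_inverse A Am -> GD_inverse A AGD ->
  [<-> X = AGD *m A *m Am;
       [/\ X *m A *m X = X, X *m A = AGD *m A, A *m X = A *m Am & A *m X *m A = A];
       [/\ X *m A *m X = X, X *m A = AGD *m A & A *m X = A *m Am];
       [/\ AGD *m A *m X = X, X *m A = AGD *m A, A *m X = A *m Am & X *m A *m Am = X]].
Proof.
move=> AmA [AGA _ _].
tfae.
- move=> ->; split.
  + exact: inner_prod_outer.
  + exact: inner_prod_mulmx.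
  + exact: mulmx_inner_prod.
  + by rewrite mulmx_inner_prod.
- by case.
- move=> [XAX XA AX]; split=> //.
  + exact: left_unit_of_outer XAX XA.
  + exact: right_unit_of_outer XAX AX.
- by move=> [GAX _ AX _]; exact: eq_inner_prod_of_left GAX AX.
Qed.
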